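(* In the reachability strategy-improvement algorithm described in the context, let $\gamma_i,\gamma_{i+1}$ be the player-1 selectors obtained at iterations $i$ and $i+1$, let $v_i=\mathrm{val}_1^{\overline{\gamma}_i}(\mathrm{Reach}(T))$, $v_{i+1}=\mathrm{val}_1^{\overline{\gamma}_{i+1}}(\mathrm{Reach}(T))$, and $I=\{s\in S:\mathrm{Pre}_1(v_i)(s)>v_i(s)\}$. Then $v_{i+1}(s)\ge\mathrm{Pre}_1(v_i)(s)$ for all $s\in S$; consequently $v_{i+1}(s)\ge v_i(s)$ for all $s\in S$ and $v_{i+1}(s)>v_i(s)$ for all $s\in I$.
   Context: Concurrent game structure $G=(S,M,\Gamma_1,\Gamma_2,\delta)$: finite states, finite moves, nonempty move sets $\Gamma_i(s)$, $\delta(s,a_1,a_2)\in\mathrm{Distr}(S)$ (simultaneous independent moves). Selectors assign to each state a distribution on available moves; $\overline{\xi}$ is the memoryless strategy playing $\xi$ forever; $\Pr_s^{\pi_1,\pi_2}$ is the induced measure on plays; $\mathrm{Reach}(X)$: plays visiting $X$. $\mathrm{val}_1^{\pi_1}(\mathrm{Reach}(T))(s)=\inf_{\pi_2}\Pr_s^{\pi_1,\pi_2}(\mathrm{Reach}(T))$, $\mathrm{val}_1(\mathrm{Reach}(T))=\sup_{\pi_1}\mathrm{val}_1^{\pi_1}(\mathrm{Reach}(T))$. For a valuation $v:S\to[0,1]$: $\mathrm{Pre}_{\xi_1,\xi_2}(v)(s)=\sum_{a,b}\sum_tv(t)\delta(s,a,b)(t)\xi_1(s)(a)\xi_2(s)(b)$,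 $\mathrm{Pre}_{1:\xi_1}(v)(s)=\inf_{\xi_2}\mathrm{Pre}_{\xi_1,\xi_2}(v)(s)$, $\mathrm{Pre}_1(v)(s)=\sup_{\xi_1}\mathrm{Pre}_{1:\xi_1}(v)(s)$. Fix $T\subseteq S$, $W_2=\{s:\mathrm{val}_1(\mathrm{Reach}(T))(s)=0\}$; all states of $T\cup W_2$ are absorbing. The algorithm: $\gamma_0$ is the uniform selector on $\Gamma_1(s)$, $v_i=\mathrm{val}_1^{\overline{\gamma}_i}(\mathrm{Reach}(T))$. At iteration $i$: $I'=\{s\in S\setminus(T\cup W_2):\mathrm{Pre}_1(v_i)(s)>v_i(s)\}$; $\xi_1$ is a selector with $\mathrm{Pre}_{1:\xi_1}(v_i)(s)=\mathrm{Pre}_1(v_i)(s)$ for $s\in I'$; $\gamma_{i+1}(s)=\gamma_i(s)$ for $s\notin I'$ and $\gamma_{i+1}(s)=\xi_1(s)$ for $s\in I'$; stop when $I'=\emptyset$. *)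

From mathcomp Require Import all_boot all_order all_algebra.
From mathcomp Require Import all_classical all_reals.
Set Implicit Arguments. Unset Strict Implicit. Unset Printing Implicit Defensive.
Import Order.TTheory GRing.Theory Num.Theory.
Local Open Scope classical_set_scope.
Local Open Scope ring_scope.

Section ConcurrentGames.
Variables (R : realType) (S M : finType).

Definition is_distr_on (A : {set M}) (d : {ffun M -> R}) : Prop :=
  [/\ forall a, 0 <= d a, forall a, a \notin A -> d a = 0 & \sum_a d a = 1].

Definition is_pdistr (d : {ffun S -> R}) : Prop :=
  (forall t, 0 <= d t) /\ \sum_t d t = 1.

(* Strategies: a history s0 s1 ... sk is represented as (s0, [:: s1; ...; sk]);
   the current state is [last s0 h].  Strategies are history-dependent and randomized. *)
Definition strategy := S -> seq S -> {ffun M -> R}.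
Definition is_strategy (G : S -> {set M}) (pi : strategy) : Prop :=
  forall s0 h, is_distr_on (G (last s0 h)) (pi s0 h).

Definition selector := S -> {ffun M -> R}.
Definition is_selector (G : S -> {set M}) (xi : selector) : Prop :=
  forall s, is_distr_on (G s) (xi s).
Definition memoryless (xi : selector) : strategy := fun s0 h => xi (last s0 h).

Variables (G1 G2 : S -> {set M}) (delta : S -> M -> M -> {ffun S -> R}) (T : {set S}).

(* Probability, under pi1/pi2 from history (s0,h), of visiting T within n further steps
   (the current state counts). *)
Fixpoint reachn (pi1 pi2 : strategy) (n : nat) (s0 : S) (h : seq S) : R :=
  let s := last s0 h in
  if s \in T then 1 else
  match n with
  | 0 => 0
  | n'.+1 => \sum_a \sum_b (pi1 s0 h a * pi2 s0 h b *
              \sum_t (delta s a b t * reachn pi1 pi2 n' s0 (rcons h t)))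
  end.

(* Pr_s^{pi1,pi2}(Reach T) = limit (= sup) of the finite-horizon probabilities
   (continuity from below of the induced measure). *)
Definition reach_prob (pi1 pi2 : strategy) (s : S) : R :=
  sup (range (fun n => reachn pi1 pi2 n s [::])).

Definition val1_strat (pi1 : strategy) (s : S) : R :=
  inf [set reach_prob pi1 pi2 s | pi2 in [set p | is_strategy G2 p]].

Definition val1 (s : S) : R :=
  sup [set val1_strat pi1 s | pi1 in [set p | is_strategy G1 p]].

Definition Pre (xi1 xi2 : selector) (v : S -> R) (s : S) : R :=
  \sum_a \sum_b \sum_t v t * delta s a b t * xi1 s a * xi2 s b.

Definition Pre1_sel (xi1 : selector) (v : S -> R) (s : S) : R :=
  inf [set Pre xi1 xi2 v s | xi2 in [set x | is_selector G2 x]].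

Definition Pre1 (v : S -> R) (s : S) : R :=
  sup [set Pre1_sel xi1 v s | xi1 in [set x | is_selector G1 x]].

Definition inW2 (s : S) : bool := val1 s == 0.

Definition uniform_sel : selector :=
  fun s => [ffun a => if a \in G1 s then (#|G1 s|%:R)^-1 else 0].

Definition vsel (g : selector) : S -> R := val1_strat (memoryless g).

Definition inI' (g : selector) (s : S) : bool :=
  [&& s \notin T, ~~ inW2 s & vsel g s < Pre1 (vsel g) s].

Definition improve_step (g g' : selector) : Prop :=
  exists xi1 : selector,
    [/\ is_selector G1 xi1,
        forall s, inI' g s -> Pre1_sel xi1 (vsel g) s = Pre1 (vsel g) s &
        forall s, g' s = if inI' g s then xi1 s else g s].

End ConcurrentGames.

From Pilot Require Import Defs.
From mathcomp Require Import all_boot all_order all_algebra.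
From mathcomp Require Import all_classical all_reals.
From mathcomp Require Import ring lra.
Import Order.TTheory GRing.Theory Num.Theory.
Local Open Scope classical_set_scope.
Local Open Scope ring_scope.
Set Implicit Arguments. Unset Strict Implicit. Unset Printing Implicit Defensive.

(* Let [v] be the value of the memoryless selector [gamma_i] and [g' = gamma_{i+1}].
   Then [v <= Pre1_sel g' v], strictly on [I'], and [Pre1 v <= Pre1_sel g' v].
   Every selector produced by the algorithm is proper (player 2 has no trap keeping the
   play among the undecided states): a trap for the uniform selector would lie in [W2],
   and the states of a trap for [g'] where [v] is maximal form a trap for [gamma_i].
   Under a proper selector the probability of staying undecided decays geometrically, so
   unrolling [v <= Pre1_sel g' v] bounds [Pre1_sel g' v] by the probability of reaching
   [T] against any player-2 strategy.  Hence [Pre1 v <= v_{i+1}], and [v <= Pre1 v]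
   gives the two consequences. *)

Section SupInfImage.
Variables (R : realType) (I : Type) (P : set I) (F : I -> R).

Lemma ge_sup_image c :
  (exists x, P x) -> (forall x, P x -> F x <= c) -> sup [set F x | x in P] <= c.
Proof.
move=> [x Px] Fc; apply: ge_sup; first by exists (F x), x.
by move=> _ [y Py <-]; apply: Fc.
Qed.

Lemma le_sup_image B x :
  (forall y, P y -> F y <= B) -> P x -> F x <= sup [set F y | y in P].
Proof.
move=> FB Px; apply: ub_le_sup; last by exists x.
by exists B => _ [y Py <-]; apply: FB.
Qed.

Lemma lb_le_inf_image c :
  (exists x, P x) -> (forall x, P x -> c <= F x) -> c <= inf [set F x | x in P].
Proof.
move=> [x Px] cF; apply: lb_le_inf; first by exists (F x), x.
by move=> _ [y Py <-]; apply: cF.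
Qed.

Lemma ge_inf_image B x :
  (forall y, P y -> B <= F y) -> P x -> inf [set F y | y in P] <= F x.
Proof.
move=> BF Px; apply: ge_inf; last by exists x.
by exists B => _ [y Py <-]; apply: BF.
Qed.

Lemma inf_image_approx e :
  (exists x, P x) -> 0 < e -> exists2 x, P x & F x < inf [set F y | y in P] + e.
Proof.
move=> [x Px] e0.
have : inf [set F y | y in P] < inf [set F y | y in P] + e by rewrite ltrDl.
by case/inf_lt => [|_ [y Py <-]]; [exists (F x), x | exists y].
Qed.

End SupInfImage.

Lemma fin_uniform_index (X : finType) (P : X -> nat -> Prop) :
  (forall x k m, (k <= m)%N -> P x k -> P x m) -> (forall x, exists k, P x k) ->
  exists K, forall x, P x K.
Proof.
move=> Pmono /boolp.choice[k Pk]; exists (\max_x k x)%N => x.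
exact: Pmono (leq_bigmax x) (Pk x).
Qed.

Lemma fin_pos_lower_bound (R : realFieldType) (X : finType) (P : pred X) (f : X -> R) :
  (forall x, P x -> 0 < f x) -> exists c, [/\ 0 < c, c <= 1 & forall x, P x -> c <= f x].
Proof.
move=> f_gt0; case: (pickP P) => [x0 Px0|P0]; last first.
  by exists 1; split=> // x; rewrite P0.
case: (arg_minP f Px0) => x Px xmin; exists (Num.min 1 (f x)).
split=> [|| y Py]; rewrite ?lt_min ?ge_min ?lexx ?ltr01 ?f_gt0 //.
by rewrite xmin ?orbT.
Qed.

Lemma Bernoulli_pow_le1 (R : realFieldType) (d : R) j :
  0 <= d <= 1 -> (1 - d) ^+ j * (1 + j%:R * d) <= 1.
Proof.
move=> /andP[d0 d1]; elim: j => [|j IH]; first by rewrite expr0 mul0r addr0 mulr1.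
have a0 : 0 <= (1 - d) ^+ j by rewrite exprn_ge0 // subr_ge0.
rewrite exprS -mulrA -natr1.
have : 0 <= (1 - d) ^+ j * ((j%:R + 1) * d ^+ 2).
  by rewrite mulr_ge0 // mulr_ge0 ?sqr_ge0 // addr_ge0 ?ler0n.
set a := (1 - d) ^+ j in a0 IH *; set jr := j%:R in IH *.
rewrite expr2; nra.
Qed.

Lemma ex_pow_le (R : archiRealFieldType) (d e : R) :
  0 < d <= 1 -> 0 < e -> exists j, (1 - d) ^+ j <= e.
Proof.
move=> /andP[d0 d1] e0; have de0 : 0 < d * e by rewrite mulr_gt0.
have x0 : 0 <= (d * e)^-1 by rewrite invr_ge0 ltW.
set j := Num.Def.archi_bound (d * e)^-1; exists j.
have Hj : 1 < j%:R * (d * e) by rewrite -ltr_pdivrMr // div1r archi_boundP.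
have B := @Bernoulli_pow_le1 R d j; rewrite ltW // d1 /= in B.
have a0 : 0 <= (1 - d) ^+ j by rewrite exprn_ge0 // subr_ge0.
set a := (1 - d) ^+ j in a0 B *; set jr := j%:R in Hj B *; nra.
Qed.

Section Distributions.
Variables (R : realType) (S M : finType).
Implicit Types (A : {set M}) (x : {ffun M -> R}).

Lemma distr_on_ge0 A x a : is_distr_on A x -> 0 <= x a.
Proof. by case. Qed.

Lemma distr_on_out A x a : is_distr_on A x -> a \notin A -> x a = 0.
Proof. by case=> _ + _; apply. Qed.

Lemma distr_on_sum A x : is_distr_on A x -> \sum_a x a = 1.
Proof. by case. Qed.

Lemma distr_on_mem A x a : is_distr_on A x -> 0 < x a -> a \in A.
Proof.
by move=> Hx xa; apply: contraT => aA; move: xa; rewrite (distr_on_out Hx aA) ltxx.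
Qed.

Lemma uniform_distr_on (G : S -> {set M}) s :
  G s != finset.set0 -> is_distr_on (G s) (uniform_sel R G s).
Proof.
move=> Gs0; split.
- by move=> a; rewrite ffunE; case: ifP => // _; rewrite invr_ge0 ler0n.
- by move=> a /negbTE aG; rewrite ffunE aG.
rewrite (bigID (mem (G s))) /= [X in _ + X]big1 ?addr0; last first.
  by move=> a /negbTE aG; rewrite ffunE aG.
under eq_bigr => a aG do rewrite ffunE aG.
by rewrite sumr_const -[LHS]mulr_natr mulVf // pnatr_eq0 -lt0n card_gt0.
Qed.

Lemma uniform_gt0 (G : S -> {set M}) s a :
  G s != finset.set0 -> a \in G s -> 0 < uniform_sel R G s a.
Proof. by move=> Gs0 aG; rewrite ffunE aG invr_gt0 ltr0n card_gt0. Qed.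

Lemma is_selector_uniform (G : S -> {set M}) :
  (forall s, G s != finset.set0) -> is_selector G (uniform_sel R G).
Proof. by move=> G0 s; apply: uniform_distr_on. Qed.

Definition point_distr (b : M) : {ffun M -> R} := [ffun b' => (b' == b)%:R].

Lemma point_distr_on A b : b \in A -> is_distr_on A (point_distr b).
Proof.
move=> bA; split.
- by move=> b'; rewrite ffunE ler0n.
- by move=> b' b'A; rewrite ffunE; case: eqP => // eb; move: b'A; rewrite eb bA.
rewrite (bigD1 b) //= ffunE eqxx big1 ?addr0 // => b' /negbTE nb.
by rewrite ffunE nb.
Qed.

Lemma is_strategy_memoryless (G : S -> {set M}) (xi : selector R S M) :
  is_selector G xi -> is_strategy G (memoryless xi).
Proof. by move=> Hxi s0 h; apply: Hxi. Qed.

End Distributions.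

Section Game.
Variables (R : realType) (S M : finType).
Variables (G1 G2 : S -> {set M}) (delta : S -> M -> M -> {ffun S -> R}) (T : {set S}).
Hypotheses (HG1 : forall s, G1 s != finset.set0) (HG2 : forall s, G2 s != finset.set0).
Hypothesis Hdelta : forall s a b, a \in G1 s -> b \in G2 s -> is_pdistr (delta s a b).

Local Notation val1 := (Defs.val1 G1 G2 delta T).
Local Notation vsel := (Defs.vsel G2 delta T).
Local Notation inW2 := (Defs.inW2 G1 G2 delta T).
Local Notation reachn := (Defs.reachn delta T).
Local Notation reach_prob := (Defs.reach_prob delta T).
Local Notation val1_strat := (Defs.val1_strat G2 delta T).
Local Notation Pre := (Defs.Pre delta).
Local Notation Pre1_sel := (Defs.Pre1_sel G2 delta).
Local Notation Pre1 := (Defs.Pre1 G1 G2 delta).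
Local Notation inI' := (Defs.inI' G1 G2 delta T).

Lemma delta_ge0 s a b t : a \in G1 s -> b \in G2 s -> 0 <= delta s a b t.
Proof. by move=> aG bG; case: (Hdelta aG bG) => + _; apply. Qed.

Definition step_exp s (x y : {ffun M -> R}) (X : S -> R) :=
  \sum_a \sum_b (x a * y b * \sum_t (delta s a b t * X t)).

Section StepExp.
Variables (s : S) (x y : {ffun M -> R}).
Hypotheses (Hx : is_distr_on (G1 s) x) (Hy : is_distr_on (G2 s) y).

Lemma step_term_ge0 (Z : S -> R) a b :
  (forall t, 0 < x a -> 0 < y b -> 0 < delta s a b t -> 0 <= Z t) ->
  0 <= x a * y b * \sum_t (delta s a b t * Z t).
Proof.
move=> Z_ge0.
have := distr_on_ge0 a Hx; rewrite le_eqVlt => /orP[/eqP <-|xa]; first by rewrite !mul0r.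
have := distr_on_ge0 b Hy; rewrite le_eqVlt => /orP[/eqP <-|yb]; first by rewrite mulr0 !mul0r.
have aG := distr_on_mem Hx xa; have bG := distr_on_mem Hy yb.
apply: mulr_ge0; first by rewrite mulr_ge0 ?ltW.
apply: sumr_ge0 => t _.
have := delta_ge0 t aG bG; rewrite le_eqVlt => /orP[/eqP <-|dt]; first by rewrite mul0r.
by apply: mulr_ge0; [exact: ltW | exact: Z_ge0].
Qed.

Lemma step_exp_ge0_support Z :
  (forall a b t, 0 < x a -> 0 < y b -> 0 < delta s a b t -> 0 <= Z t) ->
  0 <= step_exp s x y Z.
Proof. by move=> Z_ge0; do 2![apply: sumr_ge0 => ? _]; apply: step_term_ge0 => t; apply: Z_ge0. Qed.

Lemma step_exp_ge0 X : (forall t, 0 <= X t) -> 0 <= step_exp s x y X.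
Proof. by move=> X_ge0; apply: step_exp_ge0_support. Qed.

Lemma step_exp_lin X Y (k l : R) :
  step_exp s x y (fun t => k * X t + l * Y t) =
  k * step_exp s x y X + l * step_exp s x y Y.
Proof.
rewrite /step_exp !big_distrr -big_split; apply: eq_bigr => a _ /=.
rewrite !big_distrr -big_split; apply: eq_bigr => b _ /=.
by rewrite !big_distrr /= -big_split /=; apply: eq_bigr => t _; ring.
Qed.

Lemma step_exp_add X Y :
  step_exp s x y X + step_exp s x y Y = step_exp s x y (fun t => X t + Y t).
Proof.
have := step_exp_lin X Y 1 1; rewrite !mul1r => <-.
by congr step_exp; apply: boolp.funext => t; rewrite !mul1r.
Qed.

Lemma step_exp_le X Y : (forall t, X t <= Y t) -> step_exp s x y X <= step_exp s x y Y.
Proof.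
move=> XY; rewrite -subr_ge0.
have -> : step_exp s x y Y - step_exp s x y X =
          step_exp s x y (fun t => 1 * Y t + (-1) * X t).
  by rewrite step_exp_lin mul1r mulN1r.
by apply: step_exp_ge0 => t; rewrite mul1r mulN1r subr_ge0.
Qed.

Lemma step_exp_cst c : step_exp s x y (fun _ => c) = c.
Proof.
transitivity (\sum_a \sum_b (x a * y b * c)).
  apply: eq_bigr => a _; apply: eq_bigr => b _.
  have [aG|aG] := boolP (a \in G1 s); last by rewrite (distr_on_out Hx aG) !mul0r.
  have [bG|bG] := boolP (b \in G2 s); last by rewrite (distr_on_out Hy bG) !mulr0 !mul0r.
  by rewrite -big_distrl /=; case: (Hdelta aG bG) => _ ->; rewrite mul1r.
under eq_bigr do rewrite -big_distrl /=.
rewrite -big_distrl /= -[RHS]mul1r; congr (_ * _).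
rewrite -(distr_on_sum Hx); apply: eq_bigr => a _.
by rewrite -big_distrr /= (distr_on_sum Hy) mulr1.
Qed.

Lemma step_exp_le1 X : (forall t, X t <= 1) -> step_exp s x y X <= 1.
Proof. by move=> X_le1; rewrite -(step_exp_cst 1); apply: step_exp_le. Qed.

Lemma step_exp_eq0 (Z : S -> R) :
  (forall a b t, 0 < x a -> 0 < y b -> 0 < delta s a b t -> Z t = 0) ->
  step_exp s x y Z = 0.
Proof.
move=> Z0; apply: big1 => a _; apply: big1 => b _.
have := distr_on_ge0 a Hx; rewrite le_eqVlt => /orP[/eqP <-|xa]; first by rewrite !mul0r.
have := distr_on_ge0 b Hy; rewrite le_eqVlt => /orP[/eqP <-|yb]; first by rewrite mulr0 mul0r.
have aG := distr_on_mem Hx xa; have bG := distr_on_mem Hy yb.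
rewrite big1 ?mulr0 // => t _.
have := delta_ge0 t aG bG; rewrite le_eqVlt => /orP[/eqP <-|dt]; first by rewrite mul0r.
by rewrite (Z0 a b t xa yb dt) mulr0.
Qed.

Lemma step_exp_le0_support (Z : S -> R) :
  (forall a b t, 0 < x a -> 0 < y b -> 0 < delta s a b t -> 0 <= Z t) ->
  step_exp s x y Z <= 0 ->
  forall a b t, 0 < x a -> 0 < y b -> 0 < delta s a b t -> Z t = 0.
Proof.
move=> Z_ge0 Zle0 a b t xa yb dt.
have F0 a' b' : 0 <= x a' * y b' * \sum_t (delta s a' b' t * Z t).
  by apply: step_term_ge0 => t'; apply: Z_ge0.
have Sa : \sum_b' (x a * y b' * \sum_t (delta s a b' t * Z t)) = 0.
  have /eqP : step_exp s x y Z == 0 by rewrite eq_le Zle0 step_exp_ge0_support.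
  by move/psumr_eq0P; apply=> // a' _; apply: sumr_ge0.
have : x a * y b * \sum_t (delta s a b t * Z t) = 0.
  by move: Sa => /psumr_eq0P; apply.
move/eqP; rewrite !mulf_eq0 (gt_eqF xa) (gt_eqF yb) /= => /eqP/psumr_eq0P St.
have aG := distr_on_mem Hx xa; have bG := distr_on_mem Hy yb.
have /eqP : delta s a b t * Z t = 0.
  apply: St => // t' _.
  have := delta_ge0 t' aG bG; rewrite le_eqVlt => /orP[/eqP <-|dt']; first by rewrite mul0r.
  by apply: mulr_ge0; [exact: ltW | exact: Z_ge0 a b t' xa yb dt'].
by rewrite mulf_eq0 (gt_eqF dt) => /eqP.
Qed.

Lemma step_exp_indicator_ge (A : {set S}) c :
  (forall b, b \in G2 s -> exists a t, [/\ a \in G1 s, t \in A & c <= x a * delta s a b t]) ->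
  c <= step_exp s x y (fun t => (t \in A)%:R).
Proof.
move=> Hb; rewrite /step_exp exchange_big /=.
apply: (@le_trans _ _ (\sum_b y b * c)).
  by rewrite -big_distrl /= (distr_on_sum Hy) mul1r.
apply: ler_sum => b _.
have [bG|bG] := boolP (b \in G2 s); last first.
  by rewrite (distr_on_out Hy bG) mul0r sumr_ge0 // => a _; rewrite mulr0 mul0r.
have [a [t [aG tA Hc]]] := Hb b bG.
have term_ge0 a' : 0 <= x a' * y b * \sum_t (delta s a' b t * (t \in A)%:R).
  by apply: step_term_ge0 => t'; rewrite ler0n.
have Ha : x a * y b * \sum_t (delta s a b t * (t \in A)%:R) <=
          \sum_a' x a' * y b * \sum_t (delta s a' b t * (t \in A)%:R).
  by rewrite (bigD1 a) //= lerDl sumr_ge0.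
apply: le_trans _ Ha; rewrite (mulrC (x a)) -mulrA.
apply: ler_wpM2l; first exact: distr_on_ge0 Hy.
apply: le_trans Hc _; apply: ler_wpM2l; first exact: distr_on_ge0 Hx.
rewrite (bigD1 t) //= tA mulr1 lerDl sumr_ge0 // => t' _.
by rewrite mulr_ge0 ?ler0n // delta_ge0.
Qed.

End StepExp.

Lemma Pre_step_exp xi1 xi2 v s : Pre xi1 xi2 v s = step_exp s (xi1 s) (xi2 s) v.
Proof.
apply: eq_bigr => a _; apply: eq_bigr => b _ /=.
by rewrite big_distrr; apply: eq_bigr => t _ /=; ring.
Qed.

Let unif1_selector := is_selector_uniform R HG1.
Let unif2_selector := is_selector_uniform R HG2.
Let unif1 := memoryless (uniform_sel R G1).
Let unif2 := memoryless (uniform_sel R G2).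
Let unif1_strategy : is_strategy G1 unif1 := is_strategy_memoryless unif1_selector.
Let unif2_strategy : is_strategy G2 unif2 := is_strategy_memoryless unif2_selector.

Lemma reachnS p1 p2 n s0 h : reachn p1 p2 n.+1 s0 h =
  if last s0 h \in T then 1 else
  step_exp (last s0 h) (p1 s0 h) (p2 s0 h) (fun t => reachn p1 p2 n s0 (rcons h t)).
Proof. by []. Qed.

Section ReachBounds.
Variables (p1 p2 : strategy R S M).
Hypotheses (H1 : is_strategy G1 p1) (H2 : is_strategy G2 p2).

Lemma reachn_ge0_le1 n s0 h : 0 <= reachn p1 p2 n s0 h <= 1.
Proof.
elim: n h => [|n IH] h; first by rewrite /=; case: ifP; rewrite ?lexx ?ler01.
rewrite reachnS; case: ifP => _; first by rewrite ler01 lexx.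
by rewrite step_exp_ge0 ?step_exp_le1 // => t; case/andP: (IH (rcons h t)).
Qed.

Lemma reachn_le_reach_prob n s : reachn p1 p2 n s [::] <= reach_prob p1 p2 s.
Proof.
apply: (@le_sup_image _ _ setT (fun n => reachn p1 p2 n s [::]) 1) => // k _.
by case/andP: (reachn_ge0_le1 k s [::]).
Qed.

Lemma reach_prob_ge0_le1 s : 0 <= reach_prob p1 p2 s <= 1.
Proof.
apply/andP; split.
  by apply: le_trans (reachn_le_reach_prob 0 s); case/andP: (reachn_ge0_le1 0 s [::]).
apply: ge_sup_image; first by exists 0%N.
by move=> k _; case/andP: (reachn_ge0_le1 k s [::]).
Qed.

End ReachBounds.

Lemma val1_strat_le_reach_prob p1 p2 s : is_strategy G1 p1 -> is_strategy G2 p2 ->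
  val1_strat p1 s <= reach_prob p1 p2 s.
Proof.
move=> H1 H2; apply: (@ge_inf_image _ _ _ _ 0) => // p Hp.
by case/andP: (reach_prob_ge0_le1 H1 Hp s).
Qed.

Lemma val1_strat_ge0_le1 p1 s : is_strategy G1 p1 -> 0 <= val1_strat p1 s <= 1.
Proof.
move=> H1; apply/andP; split.
  apply: lb_le_inf_image; first by exists unif2.
  by move=> p Hp; case/andP: (reach_prob_ge0_le1 H1 Hp s).
apply: le_trans (val1_strat_le_reach_prob s H1 unif2_strategy) _.
by case/andP: (reach_prob_ge0_le1 H1 unif2_strategy s).
Qed.

Lemma vsel_ge0_le1 g s : is_selector G1 g -> 0 <= vsel g s <= 1.
Proof. by move=> Hg; apply/val1_strat_ge0_le1/is_strategy_memoryless. Qed.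

Lemma val1_ge0 s : 0 <= val1 s.
Proof.
apply: le_trans (@le_sup_image _ _ _ _ 1 unif1 _ unif1_strategy).
  by case/andP: (val1_strat_ge0_le1 s unif1_strategy).
by move=> p Hp; case/andP: (val1_strat_ge0_le1 s Hp).
Qed.

Lemma vsel_eq0_W2 g s : is_selector G1 g -> inW2 s -> vsel g s = 0.
Proof.
move=> Hg /eqP W; apply/eqP; rewrite eq_le; case/andP: (vsel_ge0_le1 s Hg) => -> _.
rewrite andbT -W; apply: (@le_sup_image _ _ _ (fun p => val1_strat p s) 1).
  by move=> p Hp; case/andP: (val1_strat_ge0_le1 s Hp).
exact: is_strategy_memoryless.
Qed.

Lemma reachn_ext p1 p2 q1 q2 n s0 h :
  (forall h, p1 s0 h = q1 s0 h) -> (forall h, p2 s0 h = q2 s0 h) ->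
  reachn p1 p2 n s0 h = reachn q1 q2 n s0 h.
Proof.
move=> E1 E2; elim: n h => [|n IH] h //.
rewrite !reachnS E1 E2; case: ifP => // _.
by congr step_exp; apply: boolp.funext => t; apply: IH.
Qed.

Lemma reachn_cons p1 p2 n s0 t h :
  reachn p1 p2 n s0 (t :: h) =
  reachn (fun _ h => p1 s0 (t :: h)) (fun _ h => p2 s0 (t :: h)) n t h.
Proof.
elim: n h => [|n IH] h //; rewrite !reachnS /=; case: ifP => // _.
by congr step_exp; apply: boolp.funext => u; apply: IH.
Qed.

(* Player 2 plays [xi2] for one step and then an [e]-optimal reply from the successor. *)
Lemma vsel_le_Pre g xi2 s : is_selector G1 g -> is_selector G2 xi2 -> s \notin T ->
  vsel g s <= Pre g xi2 (vsel g) s.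
Proof.
move=> Hg Hxi sT; set v := vsel g; have Hm := is_strategy_memoryless Hg.
apply/ler_addgt0Pr => e e0.
have /boolp.choice[pt Hpt] : forall t, exists p, is_strategy G2 p /\
    reach_prob (memoryless g) p t < v t + e.
  move=> t; have [|p Hp] := @inf_image_approx _ _ [set p | is_strategy G2 p]
    (fun p => reach_prob (memoryless g) p t) e _ e0; first by exists unif2.
  by exists p.
pose p2 : strategy R S M := fun s0 h =>
  if h is t :: h' then pt t t h' else xi2 s0.
have Hp2 : is_strategy G2 p2 by move=> s0 [|t h] /=; [apply: Hxi | apply: (Hpt t).1].
have Pre_ge0 : 0 <= step_exp s (g s) (xi2 s) v.
  by apply: step_exp_ge0 => // t; case/andP: (vsel_ge0_le1 t Hg).
apply: le_trans (val1_strat_le_reach_prob s Hm Hp2) _; rewrite Pre_step_exp.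
apply: ge_sup_image => [|[|k] _]; first by exists 0%N.
  by rewrite /= (negbTE sT) addr_ge0 // ltW.
rewrite reachnS /= (negbTE sT).
have -> : step_exp s (g s) (xi2 s) v + e =
          step_exp s (g s) (xi2 s) (fun t => 1 * v t + e * 1).
  by rewrite step_exp_lin // step_exp_cst // mul1r mulr1.
apply: step_exp_le => // t; rewrite mul1r mulr1 reachn_cons.
rewrite (@reachn_ext _ _ (memoryless g) (pt t)) //.
exact: le_trans (reachn_le_reach_prob Hm (Hpt t).1 _ _) (ltW (Hpt t).2).
Qed.

Lemma Pre_ge0_le1 xi1 xi2 v s : is_selector G1 xi1 -> is_selector G2 xi2 ->
  (forall t, 0 <= v t <= 1) -> 0 <= Pre xi1 xi2 v s <= 1.
Proof.
by move=> H1 H2 v01; rewrite Pre_step_exp step_exp_ge0 ?step_exp_le1 // => t;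
  case/andP: (v01 t).
Qed.

Lemma Pre1_sel_le_Pre xi1 xi2 v s : is_selector G1 xi1 -> is_selector G2 xi2 ->
  (forall t, 0 <= v t <= 1) -> Pre1_sel xi1 v s <= Pre xi1 xi2 v s.
Proof.
move=> H1 H2 v01; apply: (@ge_inf_image _ _ _ (fun xi2 => Pre xi1 xi2 v s) 0) => //.
by move=> x Hx; case/andP: (Pre_ge0_le1 s H1 Hx v01).
Qed.

Lemma Pre1_sel_le_step_exp xi1 y v s : is_selector G1 xi1 -> is_distr_on (G2 s) y ->
  (forall t, 0 <= v t <= 1) -> Pre1_sel xi1 v s <= step_exp s (xi1 s) y v.
Proof.
move=> H1 Hy v01.
pose xi2 : selector R S M := fun s' => if s' == s then y else uniform_sel R G2 s'.
have Hxi2 : is_selector G2 xi2.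
  by move=> s'; rewrite /xi2; case: eqP => [->|_]; [exact: Hy | exact: unif2_selector].
by have := Pre1_sel_le_Pre s H1 Hxi2 v01; rewrite Pre_step_exp /xi2 eqxx.
Qed.

Lemma Pre1_sel_ge0_le1 xi1 v s : is_selector G1 xi1 ->
  (forall t, 0 <= v t <= 1) -> 0 <= Pre1_sel xi1 v s <= 1.
Proof.
move=> H1 v01; apply/andP; split.
  apply: lb_le_inf_image; first by exists (uniform_sel R G2).
  by move=> xi2 H2; case/andP: (Pre_ge0_le1 s H1 H2 v01).
apply: le_trans (Pre1_sel_le_Pre s H1 unif2_selector v01) _.
by case/andP: (Pre_ge0_le1 s H1 unif2_selector v01).
Qed.

Lemma Pre1_sel_le_Pre1 xi1 v s : is_selector G1 xi1 -> (forall t, 0 <= v t <= 1) ->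
  Pre1_sel xi1 v s <= Pre1 v s.
Proof.
move=> H1 v01; apply: (@le_sup_image _ _ _ (fun xi1 => Pre1_sel xi1 v s) 1) => //.
by move=> xi H; case/andP: (Pre1_sel_ge0_le1 s H v01).
Qed.

Lemma Pre1_sel_eq xi1 xi1' v s : xi1 s = xi1' s -> Pre1_sel xi1 v s = Pre1_sel xi1' v s.
Proof.
move=> E; congr (inf [set _ | _ in _]); apply: boolp.funext => xi2.
by rewrite !Pre_step_exp E.
Qed.

Hypothesis Habs : forall s, (s \in T) || inW2 s ->
  forall a b, a \in G1 s -> b \in G2 s -> delta s a b s = 1.

Lemma delta_absorb_neq s a b t : (s \in T) || inW2 s -> a \in G1 s -> b \in G2 s ->
  t != s -> delta s a b t = 0.
Proof.
move=> Hs aG bG ts; case: (Hdelta aG bG) => d_ge0 d_sum.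
have : \sum_(t | t != s) delta s a b t = 0.
  by move: d_sum; rewrite (bigD1 s) //= (Habs Hs aG bG) -[RHS]addr0 => /addrI.
by move/psumr_eq0P; apply.
Qed.

Lemma step_exp_absorb s x y X : (s \in T) || inW2 s ->
  is_distr_on (G1 s) x -> is_distr_on (G2 s) y -> step_exp s x y X = X s.
Proof.
move=> Hs Hx Hy; rewrite -[RHS](step_exp_cst Hx Hy (X s)).
apply: eq_bigr => a _; apply: eq_bigr => b _.
have [aG|aG] := boolP (a \in G1 s); last by rewrite (distr_on_out Hx aG) !mul0r.
have [bG|bG] := boolP (b \in G2 s); last by rewrite (distr_on_out Hy bG) !mulr0 !mul0r.
congr (_ * _); rewrite (bigD1 s) //= [in RHS](bigD1 s) //= (Habs Hs aG bG).
by rewrite !big1 // => t ts; rewrite (delta_absorb_neq Hs aG bG ts) mul0r.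
Qed.

Lemma Pre1_absorb v s : (s \in T) || inW2 s -> Pre1 v s = v s.
Proof.
move=> Hs; have U1 := unif1_selector; have U2 := unif2_selector.
have Pre_s xi1 xi2 : is_selector G1 xi1 -> is_selector G2 xi2 -> Pre xi1 xi2 v s = v s.
  by move=> H1 H2; rewrite Pre_step_exp step_exp_absorb.
have Pre1_sel_s xi1 : is_selector G1 xi1 -> Pre1_sel xi1 v s = v s.
  move=> H1; apply/eqP; rewrite eq_le; apply/andP; split.
    by rewrite -(Pre_s _ _ H1 U2); apply: ge_inf_image U2 => xi2 H2; rewrite Pre_s.
  by apply: lb_le_inf_image => [|xi2 H2]; [exists (uniform_sel R G2) | rewrite Pre_s].
apply/eqP; rewrite eq_le; apply/andP; split.
  by apply: ge_sup_image => [|xi1 H1]; [exists (uniform_sel R G1) | rewrite Pre1_sel_s].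
rewrite -{1}(Pre1_sel_s _ U1).
by apply: le_sup_image U1 => xi1 H1; rewrite Pre1_sel_s.
Qed.

Lemma vsel_le_Pre1_sel g s : is_selector G1 g -> vsel g s <= Pre1_sel g (vsel g) s.
Proof.
move=> Hg; apply: lb_le_inf_image => [|xi2 Hxi]; first by exists (uniform_sel R G2).
have [sT|sT] := boolP (s \in T); last exact: vsel_le_Pre.
by rewrite Pre_step_exp step_exp_absorb ?sT.
Qed.

Lemma vsel_le_Pre1 g s : is_selector G1 g -> vsel g s <= Pre1 (vsel g) s.
Proof.
move=> Hg; apply: le_trans (vsel_le_Pre1_sel s Hg) (Pre1_sel_le_Pre1 s Hg _) => t.
exact: vsel_ge0_le1.
Qed.

Definition undecided s := (s \notin T) && ~~ inW2 s.

Fixpoint stop_exp (p1 p2 : strategy R S M) (c : R) (f : seq S -> R) (n : nat) (s0 : S)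
    (h : seq S) {struct n} : R :=
  if last s0 h \in T then c else
  if n is n'.+1 then
    step_exp (last s0 h) (p1 s0 h) (p2 s0 h) (fun t => stop_exp p1 p2 c f n' s0 (rcons h t))
  else f h.

Section StopExp.
Variables (p1 p2 : strategy R S M) (s0 : S).
Hypotheses (H1 : is_strategy G1 p1) (H2 : is_strategy G2 p2).
Local Notation E := (stop_exp p1 p2).

Lemma stop_expS c f n h : E c f n.+1 s0 h = if last s0 h \in T then c else
  step_exp (last s0 h) (p1 s0 h) (p2 s0 h) (fun t => E c f n s0 (rcons h t)).
Proof. by []. Qed.

Lemma stop_exp_T c f n h : last s0 h \in T -> E c f n s0 h = c.
Proof. by case: n => [|n] /= ->. Qed.

Lemma stop_exp_reachn n h : E 1 (fun _ => 0) n s0 h = reachn p1 p2 n s0 h.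
Proof.
elim: n h => [|n IH] h //; rewrite stop_expS reachnS; case: ifP => // _.
by congr step_exp; apply: boolp.funext => t; apply: IH.
Qed.

Lemma stop_exp_split f n h : E 1 f n s0 h = E 1 (fun _ => 0) n s0 h + E 0 f n s0 h.
Proof.
elim: n h => [|n IH] h; first by rewrite /=; case: ifP; rewrite ?addr0 ?add0r.
rewrite !stop_expS; case: ifP => _; first by rewrite addr0.
by rewrite step_exp_add; congr step_exp; apply: boolp.funext => t; apply: IH.
Qed.

Lemma stop_exp_le c f g n h : (forall h', last s0 h' \notin T -> f h' <= g h') ->
  E c f n s0 h <= E c g n s0 h.
Proof.
move=> fg; elim: n h => [|n IH] h; first by rewrite /=; case: ifP => // /negbT; apply: fg.
by rewrite !stop_expS; case: ifP => // _; apply: step_exp_le.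
Qed.

Lemma stop_exp_ge0_le1 c f n h : 0 <= c <= 1 -> (forall h, 0 <= f h <= 1) ->
  0 <= E c f n s0 h <= 1.
Proof.
move=> c01 f01; elim: n h => [|n IH] h; first by rewrite /=; case: ifP.
rewrite stop_expS; case: ifP => // _.
by rewrite step_exp_ge0 ?step_exp_le1 // => t; case/andP: (IH (rcons h t)).
Qed.

Lemma stop_exp_addn f n m h : E 0 f (n + m) s0 h = E 0 (fun h' => E 0 f m s0 h') n s0 h.
Proof.
elim: n h => [|n IH] h; first by rewrite add0n /=; case: ifP => // hT; case: m => /=; rewrite hT.
rewrite addSn !stop_expS; case: ifP => // _.
by congr step_exp; apply: boolp.funext => t; apply: IH.
Qed.

Lemma stop_expZ k f n h : E 0 (fun h => k * f h) n s0 h = k * E 0 f n s0 h.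
Proof.
elim: n h => [|n IH] h; first by rewrite /=; case: ifP; rewrite ?mulr0.
rewrite !stop_expS; case: ifP => _; first by rewrite mulr0.
have lin := step_exp_lin (last s0 h) (p1 s0 h) (p2 s0 h)
  (fun t => E 0 f n s0 (rcons h t)) (fun _ => 0) k 0.
rewrite !mul0r addr0 in lin; rewrite -lin.
by congr step_exp; apply: boolp.funext => t; rewrite IH addr0.
Qed.

Lemma stop_exp_W2 f n h : inW2 (last s0 h) ->
  (forall h', inW2 (last s0 h') -> f h' = 0) -> E 0 f n s0 h = 0.
Proof.
move=> hW f0; elim: n h hW => [|n IH] h hW; first by rewrite /=; case: ifP => // _; apply: f0.
rewrite stop_expS; case: ifP => // _.
by rewrite step_exp_absorb ?hW ?orbT //; apply: IH; rewrite last_rcons.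
Qed.

End StopExp.

Section Subsolution.
Variables (g : selector R S M) (v : S -> R) (p2 : strategy R S M) (s0 : S).
Hypotheses (Hg : is_selector G1 g) (H2 : is_strategy G2 p2) (v01 : forall t, 0 <= v t <= 1).
Local Notation E := (stop_exp (memoryless g) p2 1 (fun h => v (last s0 h))).

Lemma Pre1_sel_le_stop_expS n h : (forall t, v t <= E n s0 (rcons h t)) ->
  last s0 h \notin T -> Pre1_sel g v (last s0 h) <= E n.+1 s0 h.
Proof.
move=> Ht hT; rewrite stop_expS (negbTE hT).
apply: le_trans (Pre1_sel_le_step_exp Hg (H2 s0 h) v01) _.
exact: step_exp_le (Hg _) (H2 s0 h) _ _ Ht.
Qed.

Hypothesis v_sub : forall t, v t <= Pre1_sel g v t.

Lemma subsolution_le_stop_exp n h : v (last s0 h) <= E n s0 h.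
Proof.
elim: n h => [|n IH] h; first by rewrite /=; case: ifP => // _; case/andP: (v01 (last s0 h)).
have [hT|hT] := boolP (last s0 h \in T).
  by rewrite stop_exp_T //; case/andP: (v01 (last s0 h)).
apply: le_trans (v_sub _) (Pre1_sel_le_stop_expS _ hT) => t.
by have := IH (rcons h t); rewrite last_rcons.
Qed.

End Subsolution.

(* Unrolling [v <= Pre1_sel g v] for [n] steps, the excess of [Pre1_sel g v] over the
   [n]-step reachability probability is at most the probability of being undecided at [n]. *)
Lemma Pre1_sel_le_reach_prob g v p2 s : is_selector G1 g -> is_strategy G2 p2 ->
  (forall t, 0 <= v t <= 1) -> (forall t, v t <= Pre1_sel g v t) ->
  (forall t, inW2 t -> v t = 0) ->
  (forall e, 0 < e -> exists n,
     stop_exp (memoryless g) p2 0 (fun h => (undecided (last s h))%:R) n.+1 s [::] <= e) ->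
  Pre1_sel g v s <= reach_prob (memoryless g) p2 s.
Proof.
move=> Hg H2 v01 v_sub vW2 stay_small; have Hm := is_strategy_memoryless Hg.
have [sT|sT] := boolP (s \in T).
  apply: le_trans (reachn_le_reach_prob Hm H2 0 s); rewrite /= sT.
  by case/andP: (Pre1_sel_ge0_le1 s Hg v01).
apply/ler_addgt0Pr => e e0; have [n Hn] := stay_small e e0.
apply: (@le_trans _ _ (reachn (memoryless g) p2 n.+1 s [::] + e)); last first.
  by rewrite lerD2r; apply: reachn_le_reach_prob.
have v_le t := subsolution_le_stop_exp s Hg H2 v01 v_sub n [:: t].
apply: le_trans (@Pre1_sel_le_stop_expS g v p2 s Hg H2 v01 n [::] v_le sT) _.
rewrite stop_exp_split stop_exp_reachn lerD2l; apply: le_trans Hn.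
apply: stop_exp_le => // h' hT.
have [W|W] := boolP (inW2 (last s h')); first by rewrite vW2 // /undecided W andbF.
by rewrite /undecided hT W /=; case/andP: (v01 (last s h')).
Qed.

Fixpoint attr (g : selector R S M) (k : nat) : {set S} :=
  if k is k'.+1 then
    attr g k' :|: [set s | [forall b, (b \in G2 s) ==>
       [exists a, [exists t, [&& 0 < g s a, 0 < delta s a b t & t \in attr g k']]]]]
  else [set s | ~~ undecided s].

Definition confines (g : selector R S M) (C : {set S}) s b :=
  [forall a, [forall t, (0 < g s a) && (0 < delta s a b t) ==> (t \in C)]].

Definition trap (g : selector R S M) (C : {set S}) :=
  (forall s, s \in C -> undecided s) /\
  (forall s, s \in C -> [exists b, (b \in G2 s) && confines g C s b]).

(* In the paper a selector is proper when, against every player-2 strategy, the play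
   reaches [T] or [W2] almost surely; we define it as the absence of traps. *)
Definition proper (g : selector R S M) := forall C, trap g C -> forall s, s \notin C.

Lemma attr_mono g k m s : (k <= m)%N -> s \in attr g k -> s \in attr g m.
Proof.
elim: m => [|m IH]; first by rewrite leqn0 => /eqP ->.
rewrite leq_eqVlt => /orP[/eqP -> //|]; rewrite ltnS => km Hs.
by rewrite /= inE (IH km Hs).
Qed.

Lemma trap_not_attr g : trap g [set s | `[< forall k, s \notin attr g k >]].
Proof.
split=> s; rewrite inE => /boolp.asboolP Hs.
  by have := Hs 0%N; rewrite inE negbK.
apply: contraT; rewrite negb_exists => /forallP escape.
suff [K HK] : exists K, forall b, b \in G2 s -> exists a t,
    [/\ 0 < g s a, 0 < delta s a b t & t \in attr g K].
  have := Hs K.+1; rewrite /= inE negb_or inE => /andP[_ /negP new_out].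
  exfalso; apply: new_out.
  apply/forallP => b; apply/implyP => bG; have [a [t [ga dt tK]]] := HK b bG.
  by apply/existsP; exists a; apply/existsP; exists t; rewrite ga dt tK.
apply: (@fin_uniform_index _ (fun b K => b \in G2 s -> exists a t,
  [/\ 0 < g s a, 0 < delta s a b t & t \in attr g K])).
  move=> b k m km H bG; have [a [t [ga dt tk]]] := H bG.
  by exists a, t; split=> //; apply: attr_mono km _.
move=> b; have [bG|bG] := boolP (b \in G2 s); last by exists 0%N.
move: (escape b); rewrite bG /= /confines negb_forall => /existsP[a].
rewrite negb_forall => /existsP[t]; rewrite negb_imply => /andP[/andP[ga dt]].
rewrite inE => /boolp.asboolPn/boolp.existsNP[k /negP/negPn tk].
by exists k => _; exists a, t.
Qed.

Lemma proper_attr g : proper g -> exists K, forall s, s \in attr g K.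
Proof.
move=> Hp; apply: fin_uniform_index => [s k m km|s]; first exact: attr_mono.
have := Hp _ (trap_not_attr g) s; rewrite inE => /boolp.asboolPn/boolp.existsNP[k].
by move/negP/negPn; exists k.
Qed.

Section Decay.
Variables (g : selector R S M) (p2 : strategy R S M) (s0 : S).
Hypotheses (Hg : is_selector G1 g) (H2 : is_strategy G2 p2).
Variable c : R.
Hypotheses (c_gt0 : 0 < c) (c_le1 : c <= 1)
  (c_le : forall s a b t, 0 < g s a -> b \in G2 s -> 0 < delta s a b t ->
     c <= g s a * delta s a b t).

Let Hm := is_strategy_memoryless Hg.
Let in_undecided := fun h : seq S => (undecided (last s0 h))%:R : R.
Local Notation stay := (stop_exp (memoryless g) p2 0 in_undecided).

Lemma stay_ge0_le1 n h : 0 <= stay n s0 h <= 1.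
Proof.
apply: stop_exp_ge0_le1 => //; first by rewrite lexx ler01.
by move=> h'; rewrite /in_undecided; case: undecided; rewrite ?ler01 ?lexx.
Qed.

Lemma stay_decided n h : ~~ undecided (last s0 h) -> stay n s0 h = 0.
Proof.
rewrite /undecided negb_and !negbK => /orP[hT|hW]; first by rewrite stop_exp_T.
by apply: stop_exp_W2 => // h' W; rewrite /in_undecided /undecided W andbF.
Qed.

Lemma stay_attr k m h : (k <= m)%N -> last s0 h \in attr g k -> stay m s0 h <= 1 - c ^+ k.
Proof.
elim: k m h => [|k IH] m h km.
  by rewrite /= inE => hU; rewrite stay_decided // expr0 subrr.
have [hk|hk] := boolP (last s0 h \in attr g k).
  move=> _; apply: le_trans (IH m h (ltnW km) hk) _.
  by rewrite lerD2l lerN2 exprSr ler_piMr // exprn_ge0 // ltW.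
rewrite /= inE (negbTE hk) /= inE => /forallP attracted.
have hU : undecided (last s0 h).
  by apply: contraT => hU; move: hk; rewrite (attr_mono (leq0n k)) //= inE.
case: m km => [|m] // km; rewrite stop_expS (negbTE (proj1 (andP hU))).
set s := last s0 h.
have Hx : is_distr_on (G1 s) (memoryless g s0 h) by apply: Hg.
have Hy : is_distr_on (G2 s) (p2 s0 h) by apply: H2.
apply: (@le_trans _ _ (step_exp s (memoryless g s0 h) (p2 s0 h)
          (fun t => 1 * 1 + (- c ^+ k) * (t \in attr g k)%:R))).
  apply: step_exp_le => // t; have [tk|tk] := boolP (t \in attr g k).
    by rewrite mulr1n !mulr1; have := IH m (rcons h t) km; rewrite last_rcons; apply.
  by rewrite mulr0n mulr0 addr0 mulr1; case/andP: (stay_ge0_le1 m (rcons h t)).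
rewrite step_exp_lin step_exp_cst // mulr1.
have : c <= step_exp s (memoryless g s0 h) (p2 s0 h) (fun t => (t \in attr g k)%:R).
  apply: step_exp_indicator_ge => // b bG.
  move: (attracted b); rewrite bG => /existsP[a /existsP[t /and3P[ga dt tk]]].
  by exists a, t; split; [apply: distr_on_mem Hx ga | | apply: c_le].
rewrite exprSr; have := exprn_ge0 k (ltW c_gt0); nra.
Qed.

Lemma stay_decay K : (forall s, s \in attr g K) ->
  forall j h, stay (j * K) s0 h <= (1 - c ^+ K) ^+ j.
Proof.
move=> attrK; elim=> [|j IH] h; first by rewrite mul0n expr0; case/andP: (stay_ge0_le1 0 h).
rewrite mulSn stop_exp_addn.
apply: (@le_trans _ _ (stop_exp (memoryless g) p2 0
          (fun h' => (1 - c ^+ K) ^+ j * in_undecided h') K s0 h)).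
  apply: stop_exp_le => // h' _; rewrite /in_undecided.
  have [hU|hU] := boolP (undecided (last s0 h')); first by rewrite mulr1; apply: IH.
  by rewrite mulr0 stay_decided.
have d_ge0 : 0 <= 1 - c ^+ K by rewrite subr_ge0 exprn_ile1 // ltW.
rewrite stop_expZ exprS mulrC; apply: ler_wpM2r; first exact: exprn_ge0.
exact: stay_attr.
Qed.

End Decay.

Lemma transition_lower_bound g : exists c, [/\ 0 < c, c <= 1 &
  forall s a b t, 0 < g s a -> b \in G2 s -> 0 < delta s a b t -> c <= g s a * delta s a b t].
Proof.
pose P := fun x : S * M * M * S => let: (s, a, b, t) := x in
  [&& 0 < g s a, b \in G2 s & 0 < delta s a b t].
have [c [c_gt0 c_le1 c_le]] : exists c, [/\ 0 < c, c <= 1 &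
    forall x, P x -> c <= let: (s, a, b, t) := x in g s a * delta s a b t].
  by apply: fin_pos_lower_bound => [[[[s a] b] t]] /and3P[ga _ dt]; apply: mulr_gt0.
exists c; split=> // s a b t ga bG dt.
by apply: (c_le (s, a, b, t)); rewrite /P ga bG dt.
Qed.

(* Every state is in [attr g K], so each block of [K.+1] steps decides the play with
   probability at least [c ^+ K.+1], where [c] bounds all positive [g s a * delta s a b t]
   from below; staying undecided thus decays geometrically. *)
Lemma proper_stay_vanishes g p2 s : is_selector G1 g -> is_strategy G2 p2 -> proper g ->
  forall e, 0 < e -> exists n,
    stop_exp (memoryless g) p2 0 (fun h => (undecided (last s h))%:R) n.+1 s [::] <= e.
Proof.
move=> Hg H2 Hp e e0; have [K attrK] := proper_attr Hp.
have attrK1 s' : s' \in attr g K.+1 by apply: attr_mono (attrK s').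
have [c [c_gt0 c_le1 c_le]] := transition_lower_bound g.
have d01 : 0 < c ^+ K.+1 <= 1 by rewrite exprn_gt0 // exprn_ile1 // ltW.
have [j Hj] := ex_pow_le d01 e0; exists (j + j.+1 * K)%N.
rewrite -addSn -mulnS.
apply: le_trans (stay_decay s Hg H2 c_gt0 c_le1 c_le attrK1 j.+1 [::]) _.
apply: le_trans Hj; case/andP: d01 => d_gt0 d_le1.
by rewrite exprSr ler_piMr ?exprn_ge0 ?subr_ge0 // gerBl ltW.
Qed.

Lemma reachn_confined_eq0 (C : {set S}) p1 p2 : is_strategy G1 p1 -> is_strategy G2 p2 ->
  (forall s, s \in C -> s \notin T) ->
  (forall s0 h a b t, last s0 h \in C -> 0 < p1 s0 h a -> 0 < p2 s0 h b ->
     0 < delta (last s0 h) a b t -> t \in C) ->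
  forall n s0 h, last s0 h \in C -> reachn p1 p2 n s0 h = 0.
Proof.
move=> H1 H2 CT Cclosed; elim=> [|n IH] s0 h hC; first by rewrite /= (negbTE (CT _ hC)).
rewrite reachnS (negbTE (CT _ hC)); apply: step_exp_eq0 => // a b t xa yb dt.
by rewrite IH // last_rcons (Cclosed s0 h a b t).
Qed.

(* Player 2's confining moves keep every player-1 strategy inside a trap of the uniform
   selector, which plays every available move; so the trap lies in [W2]. *)
Lemma proper_uniform : proper (uniform_sel R G1).
Proof.
move=> C [C_undec C_conf] s1; apply/negP => s1C; set g := uniform_sel R G1.
pose conf_move s := [pick b | (b \in G2 s) && confines g C s b].
pose p2 : strategy R S M := fun s0 h =>
  if conf_move (last s0 h) is Some b then point_distr R b else uniform_sel R G2 (last s0 h).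
have H2 : is_strategy G2 p2.
  move=> s0 h; rewrite /p2 /conf_move; case: pickP => [b /andP[bG _]|_].
    exact: point_distr_on.
  exact: unif2_selector.
have reach0 p1 : is_strategy G1 p1 -> forall n, reachn p1 p2 n s1 [::] = 0.
  move=> H1 n; apply: (reachn_confined_eq0 (C := C) H1 H2) => // [s sC|s0 h a b t hC xa].
    by case/andP: (C_undec s sC).
  rewrite /p2 /conf_move; case: pickP => [b' /andP[_ /forallP b'C]|none]; last first.
    by have /existsP[b0 Hb0] := C_conf _ hC; move: (none b0); rewrite Hb0.
  rewrite ffunE; case: eqP => [-> _ dt|]; last by rewrite ltxx.
  move: (b'C a) => /forallP/(_ t).
  by rewrite dt andbT (uniform_gt0 R (HG1 _) (distr_on_mem (H1 s0 h) xa)).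
have : val1 s1 <= 0.
  apply: ge_sup_image => [|p1 H1]; first by exists unif1.
  apply: le_trans (val1_strat_le_reach_prob s1 H1 H2) _.
  by apply: ge_sup_image => [|n _]; [exists 0%N | rewrite reach0].
rewrite le_eqVlt ltNge val1_ge0 orbF => W2s1.
by move: (C_undec _ s1C); rewrite /undecided /Defs.inW2 W2s1 andbF.
Qed.

Section Improvement.
Variables (g g' xi : selector R S M).
Hypotheses (Hg : is_selector G1 g) (Hxi : is_selector G1 xi).
Hypothesis xi_opt : forall s, inI' g s -> Pre1_sel xi (vsel g) s = Pre1 (vsel g) s.
Hypothesis g'_def : forall s, g' s = if inI' g s then xi s else g s.
Local Notation v := (vsel g).

Let v01 t : 0 <= v t <= 1 := vsel_ge0_le1 t Hg.

Lemma is_selector_improve : is_selector G1 g'.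
Proof. by move=> s; rewrite g'_def; case: ifP. Qed.

Lemma improve_Pre1_sel s : Pre1_sel g' v s =
  if inI' g s then Pre1 v s else Pre1_sel g v s.
Proof.
have [I|I] := boolP (inI' g s); last by apply: Pre1_sel_eq; rewrite g'_def (negbTE I).
by rewrite -xi_opt //; apply: Pre1_sel_eq; rewrite g'_def I.
Qed.

Lemma le_improve_Pre1_sel s : v s <= Pre1_sel g' v s.
Proof.
rewrite improve_Pre1_sel; case: ifP => [/and3P[_ _ /ltW] //|_].
exact: vsel_le_Pre1_sel.
Qed.

Lemma lt_improve_Pre1_sel s : inI' g s -> v s < Pre1_sel g' v s.
Proof. by move=> I; rewrite improve_Pre1_sel I; case/and3P: I. Qed.

(* outside [I'] and the absorbing states, [Pre1 v <= v] by definition of [I'] *)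
Lemma Pre1_le_improve s : Pre1 v s <= Pre1_sel g' v s.
Proof.
rewrite improve_Pre1_sel; case: ifP => // notI.
have [absorb|] := boolP ((s \in T) || inW2 s).
  by rewrite Pre1_absorb //; apply: vsel_le_Pre1_sel.
rewrite negb_or => /andP[sT sW]; move: notI; rewrite /Defs.inI' sT sW /= => /negbT.
by rewrite -leNgt => /le_trans; apply; apply: vsel_le_Pre1_sel.
Qed.

(* On the states of a [g']-trap where [v] is maximal, player 2's confining move forces
   [Pre1_sel g' v <= max v = v], so these states lie outside [I'] (where [g'] agrees with
   [g]) and every successor is again maximal. *)
Lemma trap_max_level C m : trap g' C -> (forall s, s \in C -> v s <= m) ->
  trap g [set s in C | v s == m].
Proof.
move=> [C_undec C_conf] le_m; split=> s; rewrite inE => /andP[sC /eqP vs]; first exact: C_undec.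
have /existsP[b /andP[bG /forallP b_conf]] := C_conf s sC.
have Hx := is_selector_improve s; have Hy := point_distr_on R bG.
have succC a b' t : 0 < g' s a -> 0 < point_distr R b b' -> 0 < delta s a b' t -> t \in C.
  rewrite ffunE; case: eqP => [-> ga _ dt|]; last by rewrite ltxx.
  by move: (b_conf a) => /forallP/(_ t); rewrite ga dt.
have Z_ge0 a b' t : 0 < g' s a -> 0 < point_distr R b b' -> 0 < delta s a b' t ->
    0 <= 1 * m + (-1) * v t.
  by move=> ga yb dt; rewrite mul1r mulN1r subr_ge0 le_m // (succC a b' t).
have Pre_le : Pre1_sel g' v s <= step_exp s (g' s) (point_distr R b) v.
  exact: Pre1_sel_le_step_exp is_selector_improve Hy v01.
have Zexp : step_exp s (g' s) (point_distr R b) (fun t => 1 * m + (-1) * v t) =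
    m - step_exp s (g' s) (point_distr R b) v.
  by rewrite step_exp_lin step_exp_cst // mul1r mulN1r.
have exp_le_m : step_exp s (g' s) (point_distr R b) v <= m.
  by rewrite -subr_ge0 -Zexp step_exp_ge0_support.
have notI : ~~ inI' g s.
  by apply/negP => /lt_improve_Pre1_sel; rewrite vs ltNge (le_trans Pre_le exp_le_m).
have Z_le0 : step_exp s (g' s) (point_distr R b) (fun t => 1 * m + (-1) * v t) <= 0.
  by rewrite Zexp subr_le0 -vs (le_trans (le_improve_Pre1_sel s) Pre_le).
apply/existsP; exists b; rewrite bG /=; apply/forallP => a; apply/forallP => t.
have g's : g' s = g s by rewrite g'_def (negbTE notI).
apply/implyP; rewrite -g's => /andP[ga dt].
have := step_exp_le0_support Hx Hy Z_ge0 Z_le0 ga _ dt.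
rewrite ffunE eqxx ltr01 mul1r mulN1r => /(_ isT) /eqP; rewrite subr_eq0 => /eqP vt.
by rewrite inE (succC a b t) ?ffunE ?eqxx ?ltr01 // -vt eqxx.
Qed.

Lemma proper_improve : proper g -> proper g'.
Proof.
move=> Hp C trapC s1; apply/negP => s1C.
have [ss ssC ss_max] := arg_maxP v s1C.
have := Hp _ (trap_max_level trapC ss_max) ss.
by rewrite !inE [ss \in C]ssC eqxx.
Qed.

Lemma Pre1_le_improve_vsel s : proper g' -> Pre1 v s <= vsel g' s.
Proof.
move=> Hp'; have Hg' := is_selector_improve.
apply: lb_le_inf_image => [|p2 H2]; first by exists unif2.
apply: le_trans (Pre1_le_improve s) (Pre1_sel_le_reach_prob _ _ _ _ _ _) => //.
- exact: le_improve_Pre1_sel.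
- by move=> t; apply: vsel_eq0_W2.
exact: proper_stay_vanishes.
Qed.

End Improvement.

Lemma improve_steps_proper (gamma : nat -> selector R S M) i :
  (forall s, gamma 0%N s = uniform_sel R G1 s) ->
  (forall j, (j <= i)%N -> improve_step G1 G2 delta T (gamma j) (gamma j.+1)) ->
  forall j, (j <= i.+1)%N -> is_selector G1 (gamma j) /\ proper (gamma j).
Proof.
move=> gamma0 steps; elim=> [|j IH] ji.
  rewrite (boolp.funext gamma0); split; [exact: unif1_selector | exact: proper_uniform].
have [Hg Hp] := IH (ltnW ji); have [xi [Hxi xi_opt g'_def]] := steps j ji.
split; first exact: is_selector_improve Hg Hxi g'_def.
exact: proper_improve Hg Hxi xi_opt g'_def Hp.
Qed.

End Game.

Unset Implicit Arguments.
Set Strict Implicit.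

Theorem lemma8 (R : realType) (S M : finType)
  (G1 G2 : S -> {set M}) (delta : S -> M -> M -> {ffun S -> R}) (T : {set S})
  (HG1 : forall s, G1 s != finset.set0) (HG2 : forall s, G2 s != finset.set0)
  (Hdelta : forall s a b, a \in G1 s -> b \in G2 s -> is_pdistr (delta s a b))
  (Habs : forall s, (s \in T) || inW2 G1 G2 delta T s ->
            forall a b, a \in G1 s -> b \in G2 s -> delta s a b s = 1)
  (gamma : nat -> selector R S M) (i : nat)
  (H0 : forall s, gamma 0%N s = @uniform_sel R S M G1 s)
  (Hstep : forall j, (j <= i)%N ->
            improve_step G1 G2 delta T (gamma j) (gamma j.+1)) :
  let vi := vsel G2 delta T (gamma i) in
  let vi1 := vsel G2 delta T (gamma i.+1) in
  [/\ forall s, Pre1 G1 G2 delta vi s <= vi1 s,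
      forall s, vi s <= vi1 s &
      forall s, Pre1 G1 G2 delta vi s > vi s -> vi1 s > vi s].
Proof.
have proper_gamma := improve_steps_proper HG1 HG2 Hdelta Habs H0 Hstep.
have [Hg _] := proper_gamma i (leqnSn i).
have [_ Hp'] := proper_gamma i.+1 (leqnn _).
have [xi [Hxi xi_opt g'_def]] := Hstep i (leqnn i).
have Pre1_le := Pre1_le_improve_vsel HG1 HG2 Hdelta Habs Hg Hxi xi_opt g'_def ^~ Hp'.
have le_Pre1 s := vsel_le_Pre1 HG2 Hdelta Habs s Hg.
split=> s; first exact: Pre1_le.
  exact: le_trans (le_Pre1 s) (Pre1_le s).
by move=> lt_Pre1; apply: lt_le_trans lt_Pre1 (Pre1_le s).
Qed.
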